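(* There is an absolute constant $C > 0$ such that for every integer $L \geq 2$, every $m \geq 1$, every $\lambda \in [m]^{L+1}$ and all integers $0 \leq i < j \leq L$, every state on the path produced by running $\mathbf{Swap}(i, j)$ from $\lambda$ differs from $\lambda$ in at most $C \log L$ coordinates.
   Context: States are vectors $\lambda = (\lambda_0, \ldots, \lambda_L) \in [m]^{L+1}$, $[m] = \{1,\ldots,m\}$; coordinate $\ell$ is called level $\ell$. The recursive procedure $\mathbf{Swap}(i, j)$ for integers $0 \leq i \leq j \leq L$ acts on the current state as follows: if $j - i \leq 1$, it performs the single elementary operation ''exchange the entries at levels $i$ and $j$''; otherwise, with $h = \lfloor (i + j)/2 \rfloor$, it performs $\mathbf{Swap}(i, h)$, then $\mathbf{Swap}(h, j)$, then $\mathbf{Swap}(i, h)$. The path produced from a starting state is the sequence consisting of the starting state followed by the state obtained after each elementary operation. Two states differ in a coordinate $\ell$ if their level-$\ell$ entries are unequal. *)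

From mathcomp Require Import all_boot.
From Stdlib Require Import Reals.
Set Implicit Arguments. Unset Strict Implicit. Unset Printing Implicit Defensive.

(* A state lambda = (lambda_0, ..., lambda_L) is a sequence of naturals;
   level l is the entry at index l. *)
Definition state := seq nat.

Definition exch (s : state) (p : nat * nat) : state :=
  let: (i, j) := p in
  set_nth 0 (set_nth 0 s i (nth 0 s j)) j (nth 0 s i).

(* The sequence of elementary operations (pairs of levels) performed by
   Swap(i, j).  [fuel] only serves structural recursion; fuel = j - i is
   always sufficient since both halves have strictly smaller width. *)
Fixpoint swap_ops_fuel (fuel i j : nat) : seq (nat * nat) :=
  if j - i <= 1 then [:: (i, j)]
  else match fuel with
       | 0 => [::]
       | fuel'.+1 =>
           let h := (i + j) %/ 2 in
           swap_ops_fuel fuel' i h ++ swap_ops_fuel fuel' h j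
             ++ swap_ops_fuel fuel' i h
       end.

Definition swap_ops (i j : nat) : seq (nat * nat) := swap_ops_fuel (j - i) i j.

Definition swap_path (i j : nat) (lam : state) : seq state :=
  lam :: scanl exch lam (swap_ops i j).

Definition ndiff (L : nat) (s t : state) : nat :=
  count (fun l => nth 0 s l != nth 0 t l) (iota 0 L.+1).

Definition is_state (L m : nat) (lam : state) : bool :=
  (size lam == L.+1) && all (fun x => (1 <= x) && (x <= m)) lam.

(* A completed Swap(a, b) merely exchanges levels a and b.  Hence the three
   sub-calls of Swap(i, j) start from states differing from the initial one in
   at most 0, 2 and 4 levels, so every recursion level adds at most 4 to the
   bound, and the recursion depth is at most log2 (j - i) + 1 <= log2 L + 1. *)
From mathcomp Require Import all_boot zify.

Set Implicit Arguments.
Unset Strict Implicit.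
Unset Printing Implicit Defensive.

Lemma swap_ops_fuel_irrelevant f1 f2 i j :
  j - i <= f1 -> j - i <= f2 -> swap_ops_fuel f1 i j = swap_ops_fuel f2 i j.
Proof.
elim: f1 f2 i j => [|f1 IH] [|f2] i j le1 le2 /=; case: leqP => // wide.
1-2: exfalso; lia.
by rewrite !(IH f2) //; lia.
Qed.

Lemma swap_ops_base i j : j - i <= 1 -> swap_ops i j = [:: (i, j)].
Proof. by move=> small; rewrite /swap_ops; case: (j - i) => [|n] /=; rewrite small. Qed.

Lemma swap_ops_rec i j : 1 < j - i ->
  swap_ops i j = swap_ops i ((i + j) %/ 2) ++ swap_ops ((i + j) %/ 2) j
                   ++ swap_ops i ((i + j) %/ 2).
Proof.
rewrite {1}/swap_ops => wide; case E: (j - i) wide => [|n] //= wide.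
have fuelE k l : l - k <= n -> swap_ops_fuel n k l = swap_ops k l.
  by move=> le; apply: swap_ops_fuel_irrelevant.
by rewrite ifN ?fuelE //; lia.
Qed.

Lemma swap_width_halves i j k : j - i <= 2 ^ k.+1 ->
  (i + j) %/ 2 - i <= 2 ^ k /\ j - (i + j) %/ 2 <= 2 ^ k.
Proof. rewrite expnS; lia. Qed.

Lemma nth_exch s i j l : nth 0 (exch s (i, j)) l =
  if l == j then nth 0 s i else if l == i then nth 0 s j else nth 0 s l.
Proof. by rewrite /exch nth_set_nth /= nth_set_nth. Qed.

Lemma foldl_exch_swap_ops t i j :
  nth 0 (foldl exch t (swap_ops i j)) =1 nth 0 (exch t (i, j)).
Proof.
have [k width] : exists k, j - i <= 2 ^ k by exists (j - i); exact/ltnW/ltn_expl.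
elim: k i j t width => [|k IH] i j t width.
  by rewrite expn0 in width; rewrite swap_ops_base.
have [small|wide] := leqP (j - i) 1; first by rewrite swap_ops_base.
have [wl wr] := swap_width_halves width.
set h := (i + j) %/ 2 in wl wr *.
have [ih hj] : i < h /\ h < j by rewrite /h; lia.
have ij : i < j by lia.
have IHl u := IH i h u wl; have IHr u := IH h j u wr.
move=> l; rewrite swap_ops_rec // -/h !foldl_cat !(IHl, IHr, nth_exch).
rewrite ?(eqxx, ltn_eqF ih, gtn_eqF ih, ltn_eqF hj, gtn_eqF hj, ltn_eqF ij, gtn_eqF ij).
case: (eqVneq l i) => [->|li]; first by rewrite ?(ltn_eqF ih, ltn_eqF ij).
case: (eqVneq l j) => [->|lj]; first by rewrite ?(gtn_eqF hj).
by case: (eqVneq l h) => [->|].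
Qed.

Lemma ndiffxx L s : ndiff L s s = 0.
Proof. by rewrite /ndiff (eq_count (a2 := pred0)) ?count_pred0 // => l; rewrite eqxx. Qed.

Lemma eq_ndiff L s s' t : nth 0 s =1 nth 0 s' -> ndiff L s t = ndiff L s' t.
Proof. by move=> E; apply: eq_count => l; rewrite E. Qed.

Lemma ndiff_triangle L s t u : ndiff L s u <= ndiff L s t + ndiff L t u.
Proof.
rewrite /ndiff -count_predUI; apply: leq_trans (leq_addr _ _).
by apply: sub_count => l /=; rewrite -negb_and; apply: contra => /andP[/eqP -> /eqP ->].
Qed.

Lemma ndiff_le_support L s t (S : seq nat) :
  (forall l, l \notin S -> nth 0 s l = nth 0 t l) -> ndiff L s t <= size S.
Proof.
move=> eq_off_S; apply: leq_trans (sub_count (a2 := mem S) _ _) _.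
  by move=> l /=; apply: contraR => /eq_off_S ->.
rewrite -size_filter uniq_leq_size ?filter_uniq ?iota_uniq // => l.
by rewrite mem_filter => /andP[].
Qed.

Lemma ndiff_exch L t i j : ndiff L (exch t (i, j)) t <= 2.
Proof.
apply: (@ndiff_le_support L _ _ [:: i; j]) => l.
by rewrite !inE negb_or nth_exch => /andP[/negbTE -> /negbTE ->].
Qed.

Lemma ndiff_foldl_swap_ops L t i j : ndiff L (foldl exch t (swap_ops i j)) t <= 2.
Proof. by rewrite (eq_ndiff _ _ (foldl_exch_swap_ops t i j)) ndiff_exch. Qed.

Lemma ndiff_scanl_swap_ops L k i j t s : j - i <= 2 ^ k ->
  s \in scanl exch t (swap_ops i j) -> ndiff L s t <= 4 * k + 2.
Proof.
elim: k i j t s => [|k IH] i j t s width.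
  rewrite expn0 in width.
  by rewrite swap_ops_base // inE => /eqP ->; apply: ndiff_exch.
have [small|wide] := leqP (j - i) 1.
  rewrite swap_ops_base // inE => /eqP ->.
  exact: leq_trans (ndiff_exch _ _ _ _) (leq_addl _ _).
have [wl wr] := swap_width_halves width.
rewrite swap_ops_rec // !scanl_cat !mem_cat.
set u1 := foldl exch t _; set u2 := foldl exch u1 _.
have d1 : ndiff L u1 t <= 2 by apply: ndiff_foldl_swap_ops.
have d2 : ndiff L u2 t <= 4.
  apply: leq_trans (ndiff_triangle L u2 u1 t) _.
  by rewrite (leq_add (ndiff_foldl_swap_ops _ _ _ _) d1).
case/or3P => [in1|in2|in3].
- by have := IH _ _ _ _ wl in1; lia.
- by have := ndiff_triangle L s u1 t; have := IH _ _ _ _ wr in2; lia.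
- by have := ndiff_triangle L s u2 t; have := IH _ _ _ _ wl in3; lia.
Qed.

Lemma ndiff_swap_path L k i j lam s : j - i <= 2 ^ k ->
  s \in swap_path i j lam -> ndiff L s lam <= 4 * k + 2.
Proof.
move=> width; rewrite inE => /orP[/eqP ->|]; first by rewrite ndiffxx.
exact: ndiff_scanl_swap_ops.
Qed.

Lemma ndiff_swap_path_trunc_log L i j lam s : 1 < L -> j <= L ->
  s \in swap_path i j lam -> ndiff L s lam <= 10 * trunc_log 2 L.
Proof.
move=> L_gt1 jL in_path; have := trunc_log_gt0 2 L; rewrite L_gt1 => log_gt0.
have width : j - i <= 2 ^ (trunc_log 2 L).+1.
  by apply: leq_trans (leq_subr _ _) (leq_trans jL (ltnW (trunc_log_ltn _ _))).
by have := ndiff_swap_path L width in_path; lia.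
Qed.

(* Imported only here: Reals rebinds the nat [^] notation to [Nat.pow]. *)
From Stdlib Require Import Reals Lra Psatz.

Lemma INR_expn p k : INR (expn p k) = (INR p ^ k)%R.
Proof. by elim: k => [|k IH]; rewrite ?expn0 // expnS mult_INR IH. Qed.

Lemma trunc_log_ln p n : 1 < p -> 0 < n ->
  (INR (trunc_log p n) * ln (INR p) <= ln (INR n))%R.
Proof.
move=> p_gt1 n_gt0; have p_pos : (0 < INR p)%R by apply/lt_0_INR/ltP; lia.
rewrite -ln_pow // -INR_expn.
have /leP/le_INR := trunc_logP p_gt1 n_gt0; case/Rle_lt_or_eq_dec => [|->].
  by move=> lt_pk_n; apply/Rlt_le/ln_increasing => //; rewrite INR_expn; apply: pow_lt.
exact: Rle_refl.
Qed.

Theorem lemma2 :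
  exists C : R, (0 < C)%R /\
    forall (L m : nat) (lam : state) (i j : nat),
      2 <= L -> 1 <= m -> is_state L m lam -> i < j -> j <= L ->
      forall s, s \in swap_path i j lam ->
        (INR (ndiff L s lam) <= C * ln (INR L))%R.
Proof.
exists 20%R; split; first lra.
move=> L m lam i j L_ge2 _ _ _ jL s in_path.
have /leP/le_INR := ndiff_swap_path_trunc_log L_ge2 jL in_path.
have := trunc_log_ln (isT : 1 < 2) (ltnW L_ge2).
have := pos_INR (trunc_log 2 L); have := ln_lt_2.
change (INR 2) with 2%R; rewrite mult_INR (INR_IZR_INZ 10) /=.
nra.
Qed.
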